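(* Suppose $m\ge n\ge 2$. If $P_1,\dots,P_\ell$ are deterministic perfect channels from $\{1,\dots,m\}$ to $\{1,\dots,n\}$ such that at least one column of $P_1+\cdots+P_\ell$ has no entry equal to $\ell$, then $\{P_1,\dots,P_\ell\}$ is not $\mathcal{I}$-minimized.
   Context: Channels from $\{1,\dots,m\}$ to $\{1,\dots,n\}$ are $m\times n$ row-stochastic matrices; $\mathcal{D}$ is the set of deterministic (0-1) channels, $\mathrm{rank}(D)$ the matrix rank. A deterministic perfect channel is a deterministic channel of rank $\min(m,n)$. For a channel $W$, $\Lambda(W)=\{\lambda\text{ probability distribution on }\mathcal{D}: W=\sum_D\lambda_DD\}$, $C_{11}(\lambda)=\sum_D\lambda_D\log_2\mathrm{rank}(D)$, $\underline{C}_{11}(W)=\inf_{\lambda\in\Lambda(W)}C_{11}(\lambda)$. A subset $S\subseteq\mathcal{D}$ is $\mathcal{I}$-minimized if there is a probability distribution $\lambda$ on $\mathcal{D}$ with $\mathrm{supp}(\lambda)=S$ and $C_{11}(\lambda)=\underline{C}_{11}(W)$ where $W=\sum_D\lambda_DD$. *)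

From HB Require Import structures.
From mathcomp Require Import all_boot all_order all_algebra.
From mathcomp Require Import classical_sets reals exp.
Set Implicit Arguments. Unset Strict Implicit. Unset Printing Implicit Defensive.
Import Order.TTheory GRing.Theory Num.Theory.
Local Open Scope ring_scope.

(* Deterministic (0-1 row-stochastic) m x n channels are in bijection with
   maps 'I_m -> 'I_n : row i has its unique 1 in column f i. *)
Definition detch (m n : nat) := {ffun 'I_m -> 'I_n}.

Definition dmx {R : realType} {m n : nat} (f : detch m n) : 'M[R]_(m, n) :=
  \matrix_(i < m, j < n) (f i == j)%:R.

Definition log2 {R : realType} (x : R) : R := ln x / ln 2.

Definition is_distr {R : realType} {m n : nat} (lam : {ffun detch m n -> R}) :=
  (forall D, 0 <= lam D) /\ \sum_D lam D = 1.

Definition mix {R : realType} {m n : nat} (lam : {ffun detch m n -> R}) : 'M[R]_(m, n) :=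
  \sum_D lam D *: dmx D.

Definition Lambda {R : realType} {m n : nat} (W : 'M[R]_(m, n)) :
  set {ffun detch m n -> R} :=
  [set lam | is_distr lam /\ W = mix lam].

Definition C11 {R : realType} {m n : nat} (lam : {ffun detch m n -> R}) : R :=
  \sum_D lam D * log2 ((\rank (@dmx R m n D))%:R).

Definition uC11 {R : realType} {m n : nat} (W : 'M[R]_(m, n)) : R :=
  inf [set C11 lam | lam in Lambda W].

Definition supp {R : realType} {m n : nat} (lam : {ffun detch m n -> R}) :
  {set detch m n} := [set D | lam D != 0].

Definition I_minimized (R : realType) {m n : nat} (S : {set detch m n}) : Prop :=
  exists lam : {ffun detch m n -> R},
    [/\ is_distr lam, supp lam = S & C11 lam = uC11 (mix lam)].

Definition perfect (R : realType) {m n : nat} (D : detch m n) : Prop :=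
  \rank (@dmx R m n D) = minn m n.

From HB Require Import structures.
From mathcomp Require Import all_boot all_order all_algebra.
From mathcomp Require Import classical_sets reals exp.
Set Implicit Arguments. Unset Strict Implicit. Unset Printing Implicit Defensive.
Import Order.TTheory GRing.Theory Num.Theory.
Local Open Scope ring_scope.

(* Every perfect channel in the support has rank n, so an I-minimizing [lam]
   has C11 = log2 n.  But the row-product distribution
   [f |-> prod_i W i (f i)] also decomposes W = mix lam, and it charges the
   channel that, in each row i, follows some P_k with P_k(i) <> j.  That
   channel misses column j, so its rank is below n and the C11 of the product
   distribution is strictly smaller than log2 n. *)

Lemma ln2_gt0 (R : realType) : 0 < ln (2 : R).
Proof. by rewrite ln_gt0 // ltr1n. Qed.

Lemma log2_nat_le (R : realType) (r s : nat) : (r <= s)%N ->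
  log2 (r%:R : R) <= log2 (s%:R : R).
Proof.
move=> le_rs; rewrite /log2 ler_pM2r ?invr_gt0 ?ln2_gt0 //.
case: r le_rs => [|r] le_rs; last first.
  by rewrite ler_ln ?posrE ?ltr0n ?ler_nat // (leq_trans _ le_rs).
rewrite ln0 //; case: s le_rs => [|s] _; first by rewrite ln0.
by rewrite ln_ge0 // ler1n.
Qed.

Lemma log2_nat_lt (R : realType) (r s : nat) : (r < s)%N -> (1 < s)%N ->
  log2 (r%:R : R) < log2 (s%:R : R).
Proof.
move=> lt_rs gt1_s; rewrite /log2 ltr_pM2r ?invr_gt0 ?ln2_gt0 //.
case: r lt_rs => [|r] lt_rs; first by rewrite ln0 // ln_gt0 // ltr1n.
by rewrite ltr_ln ?posrE ?ltr0n ?ltr_nat // (leq_trans _ lt_rs).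
Qed.

Lemma log2_nat_ge0 (R : realType) (r : nat) : 0 <= log2 (r%:R : R).
Proof. by have := @log2_nat_le R 0 r (leq0n r); rewrite /log2 ln0 // mul0r. Qed.

Section Channels.

Variables (R : realType) (m n : nat).
Implicit Types (f D : detch m n) (lam : {ffun detch m n -> R}) (W : 'M[R]_(m, n)).

(* A channel avoiding column [j] factors through the n-1 remaining columns. *)
Lemma rank_dmx_avoid f (j : 'I_n) :
  (forall i, f i != j) -> (\rank (dmx f : 'M[R]_(m, n)) <= n.-1)%N.
Proof.
move=> f_avoid.
pose A : 'M[R]_(m, n.-1) := \matrix_(i, k) (f i == lift j k)%:R.
pose B : 'M[R]_(n.-1, n) := \matrix_(k, c) (lift j k == c)%:R.
have -> : dmx f = A *m B.
  apply/matrixP => i c; rewrite !mxE.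
  under eq_bigr do rewrite !mxE.
  move: (f_avoid i); case: (unliftP j (f i)) => [k0 ->|->]; last by rewrite eqxx.
  move=> _; rewrite (bigD1 k0) //= eqxx mul1r big1 ?addr0 // => k ne_k.
  by rewrite (inj_eq (@lift_inj _ j)) eq_sym (negbTE ne_k) mul0r.
exact: leq_trans (mxrankM_maxr _ _) (rank_leq_row _).
Qed.

Lemma sum_dmx_neq_missed l (P : 'I_l -> detch m n) i j :
  (\sum_(k < l) dmx (P k) : 'M[R]_(m, n)) i j != l%:R -> exists k, P k i != j.
Proof.
move=> ne_l; apply/existsP; apply: contraR ne_l => /existsPn all_j.
rewrite summxE -[l in l%:R]card_ord -sumr_const; apply/eqP/eq_bigr => k _.
by rewrite mxE (negPn (all_j k)).
Qed.

Lemma mixE lam i c : mix lam i c = \sum_D lam D * (D i == c)%:R.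
Proof. by rewrite /mix summxE; apply: eq_bigr => D _; rewrite !mxE. Qed.

Lemma mix_ge_weight lam D i : is_distr lam -> lam D <= mix lam i (D i).
Proof.
move=> [lam_ge0 _]; rewrite mixE (bigD1 D) //= eqxx mulr1 lerDl.
by rewrite sumr_ge0 // => D' _; rewrite mulr_ge0.
Qed.

Lemma mix_ge0 lam i c : is_distr lam -> 0 <= mix lam i c.
Proof.
by move=> [lam_ge0 _]; rewrite mixE sumr_ge0 // => D _; rewrite mulr_ge0.
Qed.

Lemma mix_row_sum lam i : is_distr lam -> \sum_c mix lam i c = 1.
Proof.
move=> [_ lam_sum]; under eq_bigr do rewrite mixE.
rewrite exchange_big -[RHS]lam_sum; apply: eq_bigr => D _.
rewrite -mulr_sumr (bigD1 (D i)) //= eqxx big1 ?addr0 ?mulr1 // => c.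
by rewrite eq_sym => /negbTE ->.
Qed.

Lemma supp_gt0 lam D : is_distr lam -> D \in supp lam -> 0 < lam D.
Proof. by move=> [lam_ge0 _]; rewrite inE lt_def => ->; rewrite lam_ge0. Qed.

Definition row_prod_distr W : {ffun detch m n -> R} :=
  [ffun f : detch m n => \prod_i W i (f i)].

Section RowStochastic.

Variable W : 'M[R]_(m, n).
Hypothesis W_ge0 : forall i c, 0 <= W i c.
Hypothesis W_row_sum : forall i, \sum_c W i c = 1.

Lemma row_prod_distrP : is_distr (row_prod_distr W).
Proof.
split=> [f|]; first by rewrite ffunE prodr_ge0.
under eq_bigr do rewrite ffunE.
by rewrite -(bigA_distr_bigA (fun i c => W i c)) big1 // => i _; exact: W_row_sum.
Qed.

(* The (a, b) entry is a product over rows in which row a is restricted to b. *)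
Lemma mix_row_prod_distr : mix (row_prod_distr W) = W.
Proof.
apply/matrixP => a b; rewrite /mix summxE.
pose F i c := W i c * (if i == a then (c == b)%:R else 1).
transitivity (\sum_(f : detch m n) \prod_i F i (f i)).
  apply: eq_bigr => f _; rewrite !mxE ffunE /F big_split /=.
  congr (_ * _); rewrite (bigD1 a) //= eqxx big1 ?mulr1 //.
  by move=> i /negbTE ->.
rewrite -(bigA_distr_bigA F) (bigD1 a) //= [X in _ * X]big1 => [|i /negbTE ne_ia].
  rewrite mulr1 /F eqxx (bigD1 b) //= eqxx mulr1 big1 ?addr0 // => c.
  by move/negbTE => ->; rewrite mulr0.
by rewrite /F ne_ia; under eq_bigr do rewrite mulr1.
Qed.

End RowStochastic.

Lemma C11_ge0 lam : is_distr lam -> 0 <= C11 lam.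
Proof.
by move=> [lam_ge0 _]; rewrite sumr_ge0 // => D _; rewrite mulr_ge0 ?log2_nat_ge0.
Qed.

Lemma uC11_le_C11 lam : is_distr lam -> uC11 (mix lam) <= C11 lam.
Proof.
move=> lamP; apply: ge_inf; last by exists lam.
by exists 0 => _ [lam' [lam'P _] <-]; exact: C11_ge0.
Qed.

Lemma C11_supp_rank lam r : is_distr lam ->
  (forall D, D \in supp lam -> \rank (dmx D : 'M[R]_(m, n)) = r) ->
  C11 lam = log2 (r%:R : R).
Proof.
move=> [_ lam_sum] rank_supp.
rewrite /C11 -[RHS]mul1r -lam_sum mulr_suml; apply: eq_bigr => D _.
have [->|nz_D] := eqVneq (lam D) 0; first by rewrite !mul0r.
by rewrite rank_supp // inE.
Qed.

Lemma C11_lt_log2 lam f : (1 < n)%N -> is_distr lam -> 0 < lam f ->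
  (\rank (dmx f : 'M[R]_(m, n)) < n)%N -> C11 lam < log2 (n%:R : R).
Proof.
move=> gt1_n [lam_ge0 lam_sum] lam_f_gt0 rank_f.
have -> : log2 (n%:R : R) = \sum_D lam D * log2 (n%:R : R).
  by rewrite -mulr_suml lam_sum mul1r.
rewrite /C11 [ltRHS](bigD1 f) //= [ltLHS](bigD1 f) //=.
rewrite ltr_leD ?ltr_pM2l ?log2_nat_lt //.
apply: ler_sum => D _; rewrite ler_wpM2l ?log2_nat_le //.
exact: rank_leq_col.
Qed.

End Channels.

Theorem proposition5 (R : realType) (m n : nat) (hnm : (n <= m)%N) (hn : (2 <= n)%N)
  (l : nat) (P : 'I_l -> detch m n) :
  (forall k, perfect R (P k)) ->
  (exists j : 'I_n, forall i : 'I_m, (\sum_(k < l) @dmx R m n (P k)) i j != l%:R) ->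
  ~ I_minimized R [set P k | k : 'I_l].
Proof.
move=> perfP [j col_j] [lam [lamP supp_lam C11_min]].
have C11_lam : C11 lam = log2 (n%:R : R).
  apply: C11_supp_rank => // D; rewrite supp_lam => /imsetP [k _ ->].
  by rewrite perfP (minn_idPr hnm).
have [k k_avoid] := fin_all_exists (fun i => sum_dmx_neq_missed (col_j i)).
pose f0 : detch m n := [ffun i => P (k i) i].
pose W := mix lam; pose lam' := row_prod_distr W.
have W_ge0 i c : 0 <= W i c by exact: mix_ge0.
have W_row_sum i : \sum_c W i c = 1 by exact: mix_row_sum.
have lam'P : is_distr lam' by exact: row_prod_distrP.
have lam'_f0 : 0 < lam' f0.
  rewrite ffunE prodr_gt0 // => i _; rewrite ffunE.
  apply: lt_le_trans (mix_ge_weight _ _ lamP); apply: supp_gt0 lamP _.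
  by rewrite supp_lam; apply/imsetP; exists (k i).
have rank_f0 : (\rank (dmx f0 : 'M[R]_(m, n)) < n)%N.
  have f0_avoid i : f0 i != j by rewrite ffunE.
  apply: leq_ltn_trans (rank_dmx_avoid R f0_avoid) _.
  by rewrite ltn_predL (leq_trans _ hn).
have := uC11_le_C11 lam'P.
rewrite (mix_row_prod_distr W_row_sum) -C11_min C11_lam leNgt.
by rewrite (C11_lt_log2 hn lam'P lam'_f0 rank_f0).
Qed.
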